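(* Let $f$ be as in the standing setting and quasi-strongly convex on $X$ with constant $\kappa_f>0$, i.e. $f^*\ge f(x)+\langle\nabla f(x),\bar x-x\rangle+\frac{\kappa_f}{2}\|x-\bar x\|^2$ for all $x\in X$. Let $x^0\in X$ and $x^{k+1}=[x^k-\frac1{L_f}\nabla f(x^k)]_X$ for $k\ge0$ (projected gradient method with constant step size $1/L_f$), and $\bar x^k=[x^k]_{X^*}$. Then, with $\mu_f=\kappa_f/L_f$, $$\|x^k-\bar x^k\|^2\le\left(\frac{1-\mu_f}{1+\mu_f}\right)^k\|x^0-\bar x^0\|^2\qquad\forall k\ge0.$$
   Context: Standing setting: $X\subseteq\mathbb{R}^n$ is a nonempty closed convex set; $f:X\to\mathbb{R}$ is convex and continuously differentiable, with $L_f$-Lipschitz continuous gradient on $X$ ($L_f>0$). Consider $f^*=\min_{x\in X}f(x)$ with optimal set $X^*$ nonempty and closed and $f^*$ finite. $\|\cdot\|$ is the Euclidean norm, $[u]_S$ is the Euclidean projection onto a closed convex set $S$, and $\bar x=[x]_{X^*}$. *)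

From mathcomp Require Import ssreflect ssrfun ssrbool eqtype ssrnat seq choice fintype.
From Stdlib Require Import Reals.
Open Scope R_scope.

Definition vec (n : nat) : Type := 'I_n -> R.

Definition vadd {n} (u v : vec n) : vec n := fun i => u i + v i.
Definition vsub {n} (u v : vec n) : vec n := fun i => u i - v i.
Definition vscale {n} (a : R) (u : vec n) : vec n := fun i => a * u i.

Definition vinner {n} (u v : vec n) : R :=
  foldr Rplus 0 (map (fun i => u i * v i) (enum 'I_n)).
Definition vnorm {n} (u : vec n) : R := sqrt (vinner u u).

Definition vclosed_set {n} (S : vec n -> Prop) : Prop :=
  forall (u : nat -> vec n) (y : vec n),
    (forall k, S (u k)) ->
    (forall eps, 0 < eps -> exists N, forall k, (N <= k)%nat -> vnorm (vsub (u k) y) < eps) ->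
    S y.

Definition vconvex_set {n} (S : vec n -> Prop) : Prop :=
  forall x y t, S x -> S y -> 0 <= t <= 1 ->
    S (vadd (vscale t x) (vscale (1 - t) y)).

Definition vconvex_on {n} (S : vec n -> Prop) (f : vec n -> R) : Prop :=
  forall x y t, S x -> S y -> 0 <= t <= 1 ->
    f (vadd (vscale t x) (vscale (1 - t) y)) <= t * f x + (1 - t) * f y.

Definition is_gradient_on {n} (S : vec n -> Prop) (f : vec n -> R) (g : vec n -> vec n) : Prop :=
  forall x, S x -> forall eps, 0 < eps -> exists delta, 0 < delta /\
    forall y, S y -> vnorm (vsub y x) < delta ->
      Rabs (f y - f x - vinner (g x) (vsub y x)) <= eps * vnorm (vsub y x).

Definition lipschitz_on {n} (S : vec n -> Prop) (g : vec n -> vec n) (L : R) : Prop :=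
  forall x y, S x -> S y -> vnorm (vsub (g x) (g y)) <= L * vnorm (vsub x y).

Definition is_proj {n} (S : vec n -> Prop) (u p : vec n) : Prop :=
  S p /\ forall q, S q -> vnorm (vsub u p) <= vnorm (vsub u q).

(** Let D_k = ‖x^k − x̄^k‖². Testing the variational inequality of the projection
    defining x^{k+1} at x̄^k and combining it with the descent lemma, quasi-strong
    convexity at x^k and quadratic growth f(x) − f* ≥ κ/2 ‖x − x̄‖² at x^{k+1} gives
    (L + κ) D_{k+1} ≤ (L − κ) D_k.

    Quadratic growth follows from quasi-strong convexity applied along the segment
    from x̄ to x, all of whose points still project onto x̄: the function
    ψ(t) = f(x̄ + t(x − x̄)) − f* satisfies (ψ(t)/t)' ≥ κ/2 ‖x − x̄‖² and ψ ≥ 0.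
    Gradients being only Fréchet derivatives relative to X, such derivative bounds
    are integrated through increments along a fine grid. *)

From mathcomp Require Import ssreflect ssrfun ssrbool eqtype ssrnat seq choice fintype.
From Stdlib Require Import Reals Lra Psatz FunctionalExtensionality.
Open Scope R_scope.

Definition vseg {n} (x y : vec n) (t : R) : vec n := vadd (vscale t x) (vscale (1 - t) y).

Ltac vec_ext :=
  apply: functional_extensionality => ?; rewrite /vseg /vsub /vadd /vscale; ring.

Lemma sumR_ext (T : Type) (F G : T -> R) (l : seq T) : (forall i, F i = G i) ->
  foldr Rplus 0 (map F l) = foldr Rplus 0 (map G l).
Proof. by move=> FG; elim: l => [|a l IH] //=; rewrite FG IH. Qed.

Lemma sumR_add (T : Type) (F G : T -> R) (l : seq T) :
  foldr Rplus 0 (map (fun i => F i + G i) l) =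
  foldr Rplus 0 (map F l) + foldr Rplus 0 (map G l).
Proof. by elim: l => [|a l IH] /=; [ring | rewrite IH; ring]. Qed.

Lemma sumR_scale (T : Type) (F : T -> R) (a : R) (l : seq T) :
  foldr Rplus 0 (map (fun i => a * F i) l) = a * foldr Rplus 0 (map F l).
Proof. by elim: l => [|b l IH] /=; [ring | rewrite IH; ring]. Qed.

Section Euclid.
Context {n : nat}.
Implicit Types u v w : vec n.

Lemma vinner_comm u v : vinner u v = vinner v u.
Proof. by apply: sumR_ext => i; ring. Qed.

Lemma vinner_addl u v w : vinner (vadd u v) w = vinner u w + vinner v w.
Proof. by rewrite /vinner -sumR_add; apply: sumR_ext => i; rewrite /vadd; ring. Qed.

Lemma vinner_scalel a u w : vinner (vscale a u) w = a * vinner u w.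
Proof. by rewrite /vinner -sumR_scale; apply: sumR_ext => i; rewrite /vscale; ring. Qed.

Lemma vinner_subl u v w : vinner (vsub u v) w = vinner u w - vinner v w.
Proof.
have -> : vsub u v = vadd u (vscale (-1) v) by vec_ext.
by rewrite vinner_addl vinner_scalel; ring.
Qed.

Lemma vinner_subr u v w : vinner w (vsub u v) = vinner w u - vinner w v.
Proof. by rewrite vinner_comm vinner_subl !(vinner_comm w). Qed.

Lemma vinner_scaler a u w : vinner w (vscale a u) = a * vinner w u.
Proof. by rewrite vinner_comm vinner_scalel (vinner_comm u). Qed.

Definition vinnerE := (vinner_subl, vinner_subr, vinner_scalel, vinner_scaler).

Lemma vinner_self_ge0 u : 0 <= vinner u u.
Proof.
rewrite /vinner; elim: (enum 'I_n) => [|a l IH] /=; first lra.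
by have := Rle_0_sqr (u a); rewrite /Rsqr; lra.
Qed.

Lemma vnorm_ge0 u : 0 <= vnorm u.
Proof. exact: sqrt_pos. Qed.

Lemma vnorm_sq u : vnorm u ^ 2 = vinner u u.
Proof. by rewrite /vnorm /= Rmult_1_r sqrt_sqrt //; apply: vinner_self_ge0. Qed.

Lemma vnorm_scale a u : 0 <= a -> vnorm (vscale a u) = a * vnorm u.
Proof.
move=> a_ge0; rewrite /vnorm vinner_scalel vinner_scaler -Rmult_assoc sqrt_mult_alt.
- by rewrite sqrt_square.
- nra.
Qed.

Lemma vnorm_le_sq u v : vnorm u <= vnorm v <-> vnorm u ^ 2 <= vnorm v ^ 2.
Proof. by have := vnorm_ge0 u; have := vnorm_ge0 v; split; nra. Qed.

Lemma vinner_quad u v t : 2 * t * vinner u v <= t ^ 2 * vnorm u ^ 2 + vnorm v ^ 2.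
Proof.
have := vinner_self_ge0 (vsub (vscale t u) v).
by rewrite !vinnerE !vnorm_sq (vinner_comm v u); lra.
Qed.

Lemma vinner_le_vnorm_mul u v : vinner u v <= vnorm u * vnorm v.
Proof.
have le0_of_vnorm0 u' v' : vnorm u' = 0 -> vinner u' v' <= 0.
  move=> u'0; apply: Rnot_lt_le => pos.
  have := vinner_quad u' v' ((vnorm v' ^ 2 + 1) / (2 * vinner u' v')).
  rewrite u'0; have -> : 2 * ((vnorm v' ^ 2 + 1) / (2 * vinner u' v')) * vinner u' v'
    = vnorm v' ^ 2 + 1 by field; lra.
  lra.
have := vnorm_ge0 u; have := vnorm_ge0 v.
have [u0|u_neq0] := Req_dec (vnorm u) 0.
  by rewrite u0; have := le0_of_vnorm0 u v u0; lra.
have [v0|v_neq0] := Req_dec (vnorm v) 0.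
  by rewrite v0 vinner_comm; have := le0_of_vnorm0 v u v0; lra.
move=> v_ge0 u_ge0; have := vinner_quad u v (vnorm v / vnorm u).
have -> : (vnorm v / vnorm u) ^ 2 * vnorm u ^ 2 = vnorm v ^ 2 by field.
move=> h; apply: (Rmult_le_reg_l (2 * (vnorm v / vnorm u))).
  by apply: Rmult_lt_0_compat; [lra | apply: Rdiv_lt_0_compat; lra].
have -> : 2 * (vnorm v / vnorm u) * (vnorm u * vnorm v) = 2 * vnorm v ^ 2 by field.
lra.
Qed.
End Euclid.

Lemma inv_INR_succ_bounds (N : nat) : 0 < / INR N.+1 <= 1.
Proof.
have N1_ge1 : 1 <= INR N.+1 by rewrite S_INR; have := pos_INR N; lra.
split; first by apply: Rinv_0_lt_compat; lra.
by rewrite -Rinv_1; apply: Rinv_le_contravar; lra.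
Qed.

Lemma le_of_le_add_inv (x y M : R) : 0 <= M ->
  (forall N : nat, x <= y + M / INR N.+1) -> x <= y.
Proof.
move=> M_ge0 H; apply: le_epsilon => eps eps_gt0.
have [N N_gt] := INR_unbounded (M / eps).
have N1_gt0 : 0 < INR N.+1 by apply: lt_0_INR; lia.
suff : M / INR N.+1 <= eps by have := H N; lra.
apply: (Rmult_le_reg_r (INR N.+1)) => //.
have -> : M / INR N.+1 * INR N.+1 = M by field; lra.
have N1_gt : M / eps < INR N.+1 by rewrite S_INR; move: N_gt; rewrite /Rgt; lra.
have : M / eps * eps <= INR N.+1 * eps by apply: Rmult_le_compat_r; lra.
by rewrite (_ : M / eps * eps = M); [lra | field; lra].
Qed.

Lemma increment_lower_bound (F : R -> R) (a b c K : R) : a <= b -> 0 <= K ->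
  (forall s t, a <= s -> s <= t -> t <= b -> c * (t - s) - K * (t - s) ^ 2 <= F t - F s) ->
  c * (b - a) <= F b - F a.
Proof.
move=> ab K_ge0 H.
apply: (le_of_le_add_inv _ _ (K * (b - a) ^ 2)).
  by apply: Rmult_le_pos => //; apply: pow2_ge_0.
move=> N; have N1_gt0 : 0 < INR N.+1 by apply: lt_0_INR; lia.
set h := (b - a) / INR N.+1.
have h_ge0 : 0 <= h by apply: Rle_mult_inv_pos; lra.
have grid j : (j <= N.+1)%nat ->
    c * (INR j * h) - K * INR j * h ^ 2 <= F (a + INR j * h) - F a.
  elim: j => [|j IH] j_le; first by rewrite /= !Rmult_0_l Rplus_0_r; lra.
  have jN : INR j.+1 <= INR N.+1 by apply: le_INR; apply/leP.
  have j_ge0 := pos_INR j.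
  have := H (a + INR j * h) (a + INR j.+1 * h).
  rewrite S_INR in jN *.
  have end_le : (INR j + 1) * h <= b - a.
    by rewrite (_ : b - a = INR N.+1 * h); [nra | rewrite /h; field; lra].
  have -> : a + (INR j + 1) * h - (a + INR j * h) = h by ring.
  move=> /(_ ltac:(nra) ltac:(nra) ltac:(lra)) step.
  have := IH (ltnW j_le); nra.
have := grid N.+1 (leqnn _).
have -> : INR N.+1 * h = b - a by rewrite /h; field; lra.
have -> : K * INR N.+1 * h ^ 2 = K * (b - a) ^ 2 / INR N.+1 by rewrite /h; field; lra.
rewrite Rplus_minus; lra.
Qed.

Lemma le_of_chord_slope_growth (psi : R -> R) (c : R) : 0 <= c ->
  (forall t, 0 <= t <= 1 -> 0 <= psi t) ->
  (forall s t, 0 < s -> s <= t -> t <= 1 -> t * psi s + (t - s) * s ^ 2 * c <= s * psi t) ->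
  c <= psi 1.
Proof.
move=> c_ge0 psi_ge0 psi_step.
have tail_bound d : 0 < d <= 1 -> c * (1 - d) <= psi 1.
  move=> d01.
  (* On [d, 1] the increments of psi t / t are at least c (t - s) s / t
     >= c (t - s) - c / d * (t - s) ^ 2. *)
  have : c * (1 - d) <= psi 1 / 1 - psi d / d.
    apply: (increment_lower_bound (fun t => psi t / t) d 1 c (c / d))
      => [|| s t ds st t_le1]; first lra.
      by apply: Rle_mult_inv_pos; lra.
    have s_gt0 : 0 < s by lra.
    have := psi_step s t s_gt0 st t_le1.
    set a := psi s / s; set b := psi t / t.
    have psi_s : psi s = a * s by rewrite /a; field; lra.
    have psi_t : psi t = b * t by rewrite /b; field; lra.
    rewrite psi_s psi_t => step.
    have {}step : t * a + (t - s) * s * c <= t * b by apply: (Rmult_le_reg_l s) => //; lra.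
    have c_le : c <= c / d * t.
      rewrite -{1}(_ : c / d * d = c); last by field; lra.
      by apply: Rmult_le_compat_l; [apply: Rle_mult_inv_pos|]; lra.
    have := Rmult_le_compat_r ((t - s) ^ 2) _ _ (pow2_ge_0 _) c_le.
    by move=> err; apply: (Rmult_le_reg_l t); lra.
  have : 0 <= psi d / d by apply: Rle_mult_inv_pos; [apply: psi_ge0|]; lra.
  by rewrite Rdiv_1_r; lra.
apply: (le_of_le_add_inv _ _ c) => // N.
have := tail_bound _ (inv_INR_succ_bounds N).
by rewrite /Rdiv; lra.
Qed.

Section Segment.
Context {n : nat} (x y : vec n).

Lemma vseg_sub s t : vsub (vseg x y t) (vseg x y s) = vscale (t - s) (vsub x y).
Proof. by vec_ext. Qed.

Lemma vseg_subr t : vsub (vseg x y t) y = vscale t (vsub x y).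
Proof. by vec_ext. Qed.

Lemma vseg0 : vseg x y 0 = y.
Proof. by vec_ext. Qed.

Lemma vseg1 : vseg x y 1 = x.
Proof. by vec_ext. Qed.

End Segment.

Lemma is_proj_vinner_le0 {n} (S : vec n -> Prop) u p z :
  vconvex_set S -> is_proj S u p -> S z -> vinner (vsub u p) (vsub z p) <= 0.
Proof.
move=> S_convex [Sp p_min] Sz.
apply: (le_of_le_add_inv _ _ (vinner (vsub z p) (vsub z p) / 2)).
  by have := vinner_self_ge0 (vsub z p); lra.
move=> N; have [t_gt0 t_le1] := inv_INR_succ_bounds N; set t := / INR N.+1 in t_gt0 t_le1 *.
have /vnorm_le_sq := p_min _ (S_convex z p t Sz Sp (conj (Rlt_le _ _ t_gt0) t_le1)).
have -> : vsub u (vseg z p t) = vsub (vsub u p) (vscale t (vsub z p)) by vec_ext.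
rewrite !vnorm_sq /Rdiv -/t; move: (vsub u p) (vsub z p) => a e.
rewrite !vinnerE (vinner_comm e a); nra.
Qed.

Lemma is_proj_of_vinner_le0 {n} (S : vec n -> Prop) u p :
  S p -> (forall z, S z -> vinner (vsub u p) (vsub z p) <= 0) -> is_proj S u p.
Proof.
move=> Sp obtuse; split=> // q Sq; apply/vnorm_le_sq.
have -> : vsub u q = vsub (vsub u p) (vsub q p) by vec_ext.
have := obtuse q Sq; have := vinner_self_ge0 (vsub q p).
rewrite !vnorm_sq; move: (vsub u p) (vsub q p) => a e.
by rewrite !vinnerE (vinner_comm e a); lra.
Qed.

Section Smooth.
Variables (n : nat) (X : vec n -> Prop) (f : vec n -> R) (g : vec n -> vec n).
Hypotheses (X_convex : vconvex_set X) (f_convex : vconvex_on X f)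
  (f_grad : is_gradient_on X f g).

Lemma convex_first_order w z : X w -> X z -> f w + vinner (g w) (vsub z w) <= f z.
Proof.
move=> Xw Xz; set d := vsub z w; have d_ge0 := vnorm_ge0 d.
apply: le_epsilon => e e_gt0.
have eps_gt0 : 0 < e / (vnorm d + 1) by apply: Rdiv_lt_0_compat; lra.
have [delta [delta_gt0 near_w]] := f_grad w Xw _ eps_gt0.
set t := Rmin 1 (delta / (vnorm d + 1)).
have t_gt0 : 0 < t by apply: Rmin_pos; [lra | apply: Rdiv_lt_0_compat; lra].
have t_le1 : t <= 1 by apply: Rmin_l.
have td_lt : t * vnorm d < delta.
  have : t * (vnorm d + 1) <= delta.
    apply: (Rle_trans _ (delta / (vnorm d + 1) * (vnorm d + 1))).
      by apply: Rmult_le_compat_r; [lra | apply: Rmin_r].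
    by rewrite /Rdiv Rmult_assoc Rinv_l; lra.
  lra.
have t01 : 0 <= t <= 1 by lra.
have := f_convex z w t Xz Xw t01.
have := near_w _ (X_convex z w t Xz Xw t01).
rewrite vseg_subr vnorm_scale ?vinner_scaler; last lra.
move=> /(_ td_lt); rewrite -Rabs_Ropp => /(Rle_trans _ _ _ (Rle_abs _)) lin_lower conv.
set ed := e / (vnorm d + 1) * vnorm d.
have ed_le : ed <= e.
  by rewrite /ed (_ : _ * vnorm d = e - e / (vnorm d + 1)); [lra | field; lra].
have : t * (f w + vinner (g w) d - f z - ed) <= 0.
  by move: lin_lower conv; rewrite -/(vseg z w t) -/d /ed; lra.
nra.
Qed.

Lemma descent_lemma L y p : 0 <= L -> lipschitz_on X g L -> X y -> X p ->
  f p <= f y + vinner (g y) (vsub p y) + L / 2 * vnorm (vsub p y) ^ 2.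
Proof.
move=> L_ge0 g_lip Xy Xp.
set d := vsub p y; set D := vnorm d ^ 2; set I := vinner (g y) d.
have d_ge0 := vnorm_ge0 d.
have Xseg t : 0 <= t <= 1 -> X (vseg p y t) by move=> t01; apply: X_convex.
pose F t := t * I + L / 2 * t ^ 2 * D - f (vseg p y t).
suff : 0 * (1 - 0) <= F 1 - F 0 by rewrite /F vseg0 vseg1 /=; lra.
apply: (increment_lower_bound _ _ _ _ (L / 2 * D)) => [|| s t s_ge0 st t_le1]; first lra.
  by apply: Rmult_le_pos; [lra | apply: pow2_ge_0].
have := convex_first_order _ _ (Xseg t ltac:(lra)) (Xseg s ltac:(lra)).
rewrite vseg_sub vinner_scaler -/d => first_order.
have grad_bound : vinner (g (vseg p y t)) d <= I + L * t * D.
  have := vinner_le_vnorm_mul (vsub (g (vseg p y t)) (g y)) d.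
  have := g_lip _ _ (Xseg t ltac:(lra)) Xy.
  have := vnorm_ge0 (vsub (g (vseg p y t)) (g y)).
  rewrite vseg_subr vnorm_scale -/d; last lra.
  rewrite vinner_subl -/I /D => N_ge0 lip cs.
  have := Rmult_le_compat_r _ _ _ d_ge0 lip; nra.
have := Rmult_le_compat_l (t - s) _ _ ltac:(lra) grad_bound.
rewrite /F; nra.
Qed.

Variables fstar kappa : R.
Hypothesis f_ge_fstar : forall z, X z -> fstar <= f z.
Local Notation Xstar := (fun w : vec n => X w /\ f w = fstar).

Lemma argmin_convex : vconvex_set Xstar.
Proof.
move=> x y t [Xx fx] [Xy fy] t01; have Xt := X_convex x y t Xx Xy t01; split=> //.
move: (f_convex x y t Xx Xy t01) (f_ge_fstar _ Xt); rewrite fx fy => f_le f_ge.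
by apply: Rle_antisym; lra.
Qed.

Hypotheses (kappa_ge0 : 0 <= kappa)
  (f_qsc : forall z zb, X z -> is_proj Xstar z zb ->
     fstar >= f z + vinner (g z) (vsub zb z) + kappa / 2 * vnorm (vsub z zb) ^ 2).

Lemma quadratic_growth x xb : X x -> is_proj Xstar x xb ->
  kappa / 2 * vnorm (vsub x xb) ^ 2 <= f x - fstar.
Proof.
move=> Xx xb_proj; have [[Xxb fxb] _] := xb_proj.
set e := vsub x xb; set c := kappa / 2 * vnorm e ^ 2.
have c_ge0 : 0 <= c by apply: Rmult_le_pos; [lra | apply: pow2_ge_0].
have Xseg t : 0 <= t <= 1 -> X (vseg x xb t) by move=> t01; apply: X_convex.
pose psi t := f (vseg x xb t) - fstar.
have psi_ge0 t : 0 <= t <= 1 -> 0 <= psi t.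
  by move=> t01; have := f_ge_fstar _ (Xseg t t01); rewrite /psi; lra.
have seg_proj t : 0 <= t <= 1 -> is_proj Xstar (vseg x xb t) xb.
  move=> t01; apply: is_proj_of_vinner_le0 => // z Xstar_z.
  rewrite vseg_subr vinner_scalel.
  by have := is_proj_vinner_le0 _ _ _ _ argmin_convex xb_proj Xstar_z; rewrite -/e; nra.
have qsc_seg s : 0 <= s <= 1 -> psi s + c * s ^ 2 <= s * vinner (g (vseg x xb s)) e.
  move=> s01; have := f_qsc _ _ (Xseg s s01) (seg_proj s s01).
  have -> : vsub xb (vseg x xb s) = vscale (- s) (vsub x xb) by vec_ext.
  rewrite vseg_subr vnorm_scale -/e ?vinner_scaler; last lra.
  by rewrite /psi /c; nra.
have psi_step s t : 0 < s -> s <= t -> t <= 1 ->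
    t * psi s + (t - s) * s ^ 2 * c <= s * psi t.
  move=> s_gt0 st t_le1.
  have := convex_first_order _ _ (Xseg s ltac:(lra)) (Xseg t ltac:(lra)).
  rewrite vseg_sub vinner_scaler -/e => first_order.
  have := Rmult_le_compat_l (t - s) _ _ ltac:(lra) (qsc_seg s ltac:(lra)).
  move: first_order; rewrite /psi; nra.
by have := le_of_chord_slope_growth psi c c_ge0 psi_ge0 psi_step; rewrite /psi vseg1.
Qed.

Lemma projected_gradient_contraction L y p yb pb :
  0 < L -> lipschitz_on X g L -> X y ->
  is_proj X (vsub y (vscale (1 / L) (g y))) p ->
  is_proj Xstar y yb -> is_proj Xstar p pb ->
  (L + kappa) * vnorm (vsub p pb) ^ 2 <= (L - kappa) * vnorm (vsub y yb) ^ 2.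
Proof.
move=> L_gt0 g_lip Xy p_proj yb_proj pb_proj.
have Xp := p_proj.1; have [[Xyb fyb] _] := yb_proj.
have := is_proj_vinner_le0 _ _ _ _ X_convex p_proj Xyb.
have := descent_lemma _ _ _ (Rlt_le _ _ L_gt0) g_lip Xy Xp.
have := f_qsc _ _ Xy yb_proj.
have := quadratic_growth _ _ Xp pb_proj.
have /vnorm_le_sq := pb_proj.2 yb (conj Xyb fyb).
have -> : vsub (vsub y (vscale (1 / L) (g y))) p
    = vsub (vsub (vsub y yb) (vsub p yb)) (vscale (1 / L) (g y)) by vec_ext.
have -> : vsub yb p = vscale (-1) (vsub p yb) by vec_ext.
have -> : vsub p y = vsub (vsub p yb) (vsub y yb) by vec_ext.
have -> : vsub yb y = vscale (-1) (vsub y yb) by vec_ext.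
rewrite !vnorm_sq; move: (vsub y yb) (vsub p yb) (vsub p pb) (g y) => A B P G.
rewrite !vinnerE (vinner_comm B A) => pb_closer growth qsc descent obtuse.
have GB : vinner G B <= L * (vinner A B - vinner B B).
  rewrite -[vinner G B](Rmult_1_l) -(Rinv_r L) ?Rmult_assoc; last lra.
  by apply: Rmult_le_compat_l; lra.
have := Rmult_le_compat_l L _ _ (Rlt_le _ _ L_gt0) pb_closer.
lra.
Qed.

End Smooth.

Lemma geometric_decay (D : nat -> R) (a b : R) : 0 < b -> (forall k, 0 <= D k) ->
  (forall k, b * D k.+1 <= a * D k) -> forall k, D k <= (a / b) ^ k * D 0%nat.
Proof.
move=> b_gt0 D_ge0 step.
have [a_ge0 | a_lt0] := Rle_lt_dec 0 a; last first.
  have D0 k : D k = 0 by have := step k; have := D_ge0 k; have := D_ge0 k.+1; nra.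
  by move=> k; rewrite !D0 Rmult_0_r; lra.
have ratio_step k : D k.+1 <= a / b * D k.
  apply: (Rmult_le_reg_l b) => //.
  by rewrite -Rmult_assoc (_ : b * (a / b) = a) //; field; lra.
elim=> [|k IH]; first by rewrite /=; lra.
apply: Rle_trans (ratio_step k) _; rewrite /= Rmult_assoc.
by apply: Rmult_le_compat_l => //; apply: Rle_mult_inv_pos.
Qed.

Theorem theorem11 (n : nat) (X : vec n -> Prop) (f : vec n -> R)
  (gradf : vec n -> vec n) (Lf fstar kappa : R) (x xbar : nat -> vec n) :
  (exists z : vec n, X z) -> vclosed_set X -> vconvex_set X ->
  vconvex_on X f -> is_gradient_on X f gradf ->
  0 < Lf -> lipschitz_on X gradf Lf ->
  (forall z : vec n, X z -> fstar <= f z) ->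
  (exists z : vec n, X z /\ f z = fstar) ->
  vclosed_set (fun z : vec n => X z /\ f z = fstar) ->
  0 < kappa ->
  (forall z zb : vec n, X z -> is_proj (fun w : vec n => X w /\ f w = fstar) z zb ->
     fstar >= f z + vinner (gradf z) (vsub zb z) + kappa / 2 * (vnorm (vsub z zb)) ^ 2) ->
  X (x 0%nat) ->
  (forall k, is_proj X (vsub (x k) (vscale (1 / Lf) (gradf (x k)))) (x (S k))) ->
  (forall k, is_proj (fun w : vec n => X w /\ f w = fstar) (x k) (xbar k)) ->
  forall k : nat,
    (vnorm (vsub (x k) (xbar k))) ^ 2 <=
      ((1 - kappa / Lf) / (1 + kappa / Lf)) ^ k * (vnorm (vsub (x 0%nat) (xbar 0%nat))) ^ 2.
Proof.
move=> _ _ X_convex f_convex f_grad L_gt0 g_lip f_ge_fstar _ _ kappa_gt0 f_qsc x0_in x_step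
  xbar_proj k.
have x_in j : X (x j) by case: j => [|j] //; have [] := x_step j.
rewrite (_ : (1 - kappa / Lf) / (1 + kappa / Lf) = (Lf - kappa) / (Lf + kappa)); last first.
  by field; lra.
apply: (geometric_decay (fun j => vnorm (vsub (x j) (xbar j)) ^ 2)) => [|j|j]; first lra.
  exact: pow2_ge_0.
exact: (projected_gradient_contraction _ _ _ _ X_convex f_convex f_grad _ _ f_ge_fstar
  (Rlt_le _ _ kappa_gt0) f_qsc _ _ _ _ _ L_gt0 g_lip (x_in j) (x_step j) (xbar_proj j)
  (xbar_proj j.+1)).
Qed.
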